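(* Let $G$ be a graph on $n\ge 3$ vertices, and let $f:\binom{V(G)}{2}\to\mathbb{Z}_{\ge 0}$ be such that for all distinct $u,v\in V(G)$, there are $f(u,v)$ disjoint super-paths in $G$ connecting $u$ and $v$. (a) Then $e(G)\ge\left\lceil\frac{w(f)}{n-2}\right\rceil$. (b) Suppose that $e(G)\ge 1$ and $e(G)=\left\lceil\frac{w(f)}{n-2}\right\rceil$. Then $\Delta(G)-\delta(G)\le 1$, and one of the following holds: (i) $G$ is regular and $\Delta(G)=\delta(G)\ge 2$; (ii) $G$ has exactly one vertex of degree $\delta(G)$, and $\Delta(G)\ge 3$, $\delta(G)\ge 2$; (iii) $G$ has exactly one vertex of degree $\Delta(G)$, and $\Delta(G)\ge 4$, $\delta(G)\ge 3$. Moreover, \[ e(G)=\left\lceil\frac{w(f)}{n-2}\right\rceil=\left\lceil\frac{w(m_G)}{n-2}\right\rceil=\frac{w(m_G)+s}{n-2}, \] where $s=0$ if $G$ is regular, and $s=\frac{n-1}{2}$ otherwise.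
   Context: All graphs are finite, simple and undirected; $\delta(G)$, $\Delta(G)$ are the minimum and maximum degree. A super-path is a path of length at least two. Paths are called disjoint if they are internally vertex-disjoint. For $f:\binom{V(G)}{2}\to\mathbb{Z}_{\ge 0}$ write $f(u,v)=f(\{u,v\})$ and $w(f)=\sum_{\{u,v\}\in\binom{V(G)}{2}} f(u,v)$. Define $m_G:\binom{V(G)}{2}\to\mathbb{Z}_{\ge0}$ by $m_G(u,v)=\min(\deg_G(u),\deg_G(v))-1$ if $uv\in E(G)$, and $m_G(u,v)=\min(\deg_G(u),\deg_G(v))$ if $uv\notin E(G)$. *)

From mathcomp Require Import all_boot.
Set Implicit Arguments. Unset Strict Implicit. Unset Printing Implicit Defensive.

(* A finite simple graph: vertex type T (finType), adjacency e : rel T,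
   symmetric and irreflexive (assumed as hypotheses in the theorem). *)
Section Graph.
Variables (T : finType) (e : rel T).

Definition deg (x : T) : nat := #|[set y | e x y]|.
Definition maxdeg : nat := \max_(x : T) deg x.
Definition mindeg : nat := \big[minn/#|T|]_(x : T) deg x.

Definition edges : {set {set T}} :=
  [set s : {set T} | [exists x, exists y, e x y && (s == [set x; y])]].
Definition nedges : nat := #|edges|.

(* A super-path from u to v with interior vertex sequence p:
   u, p_1, ..., p_k, v is a path of the graph with distinct vertices and
   length k+1 >= 2. *)
Definition superpath (u v : T) (p : seq T) : bool :=
  [&& p != [::], path e u (rcons p v) & uniq (u :: rcons p v)].

Definition disjoint_superpaths (u v : T) (ps : seq (seq T)) : bool :=
  all (superpath u v) ps &&
  pairwise (fun p q => all (fun x => x \notin q) p) ps.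

(* functions on binom(V,2) are functions on {set T}, only evaluated on 2-sets *)
Definition weight (f : {set T} -> nat) : nat :=
  \sum_(s : {set T} | #|s| == 2) f s.

Definition mG (s : {set T}) : nat :=
  (\big[minn/#|T|]_(x in s) deg x) - (s \in edges).

Definition regular : bool := maxdeg == mindeg.

End Graph.

Definition ceil_div (a b : nat) : nat := (a + b.-1) %/ b.

From mathcomp Require Import all_boot.
From HB Require Import structures.
From mathcomp Require Import zify.
Set Implicit Arguments. Unset Strict Implicit. Unset Printing Implicit Defensive.

(** The [f(u,v)] disjoint super-paths leave [u] through distinct neighbours
    other than [v], each of degree at least 2; hence [f <= m_G] on every pair.
    Summing [2 min(a,b) + |a - b| = a + b] over all ordered pairs of degrees
    gives [4 w(m_G) + S = 4 (n-2) e(G)], where [S = sum_{u,v} |d(u) - d(v)|],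
    and (a) follows.  When (a) is tight, [S <= 4 (n-3)].  Since
    [S >= 2 (n-1) (Delta - delta)], the degrees take at most two consecutive
    values, and then [S = 2 k (n-k)] with [k] vertices of degree [delta], which
    forces [k = 1] or [k = n-1] and [S = 2 (n-1)].  The remaining small-degree
    configurations are ruled out by the parity of the degree sum, and by the
    fact that a graph with a single vertex of degree at least 2 carries at most
    one super-path between all pairs together. *)

(* Lets [bigD1] split the [\big[minn/_]] defining [mindeg] and [mG]. *)
HB.instance Definition _ := SemiGroup.isComLaw.Build nat minn minnA minnC.

Lemma leq_ceil_div a b c : 0 < b -> (ceil_div a b <= c) = (a <= c * b).
Proof. by move=> b_gt0; rewrite /ceil_div -ltnS ltn_divLR // mulSn; lia. Qed.

Lemma leq_ceil_div2r b a1 a2 : a1 <= a2 -> ceil_div a1 b <= ceil_div a2 b.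
Proof. by move=> le_a; rewrite leq_div2r // leq_add2r. Qed.

Lemma ceil_divM_le a b : ceil_div a b * b <= a + b.-1.
Proof. exact: leq_divM. Qed.

Section Counting.
Variable T : finType.

Lemma sum_indicator (P : pred T) : \sum_x (P x : nat) = #|[set x | P x]|.
Proof. by rewrite -sum1dep_card [RHS]big_mkcond; apply: eq_bigr => x _; case: (P x). Qed.

Lemma eq_set2 (x y a b : T) : x != y ->
  ([set x; y] == [set a; b]) = ((x == a) && (y == b)) || ((x == b) && (y == a)).
Proof.
move=> xy; apply/eqP/orP => [E|[/andP[/eqP-> /eqP->]|/andP[/eqP-> /eqP->]]];
  [ | by [] | by rewrite setUC].
have : x \in [set a; b] by rewrite -E !inE eqxx.
have : y \in [set a; b] by rewrite -E !inE eqxx orbT.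
rewrite !inE => /orP[]/eqP yE /orP[]/eqP xE; subst x y;
  by apply/orP; rewrite ?eqxx ?andbT ?orbT in xy *.
Qed.

Lemma sum_pairs_set2 (F : {set T} -> nat) :
  \sum_u \sum_(v | v != u) F [set u; v] = 2 * weight F.
Proof.
rewrite pair_big_dep /= (partition_big (fun q : T * T => [set q.1; q.2])
  (fun s : {set T} => #|s| == 2)); last first.
  by case=> x y /= yx; rewrite cards2 (eq_sym x) yx.
rewrite /weight big_distrr /=; apply: eq_bigr => s /cards2P[a [b [ab ->]]].
rewrite (eq_bigr (fun _ => F [set a; b])); last by move=> q /andP[_ /eqP->].
rewrite (eq_bigl (fun q => q \in [set (a, b); (b, a)])); last first.
  case=> x y /=; rewrite !inE /=; case: (y =P x) => [->|/eqP yx] /=.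
    apply/esym/negbTE; rewrite !xpair_eqE negb_or !negb_and.
    by case: (x =P a) => [->|/eqP xa]; rewrite ?ab ?xa ?orbT.
  by rewrite (eq_set2 a b) ?xpair_eqE // eq_sym.
by rewrite sum_nat_const cards2 xpair_eqE negb_and ab mulnC.
Qed.

End Counting.

Section Spread.
Variables (T : finType) (d : T -> nat).

Definition spread : nat := \sum_u \sum_v ((d u - d v) + (d v - d u)).

Lemma spread_eq0 : (forall u v, d u = d v) -> spread = 0.
Proof. by move=> d_const; apply: big1 => u _; apply: big1 => v _; rewrite (d_const u v) subnn. Qed.

Lemma spread_ge_range x0 x1 : (forall x, d x0 <= d x <= d x1) ->
  2 * (#|T| - 1) * (d x1 - d x0) <= spread.
Proof.
move=> range; have [<-|x01] := eqVneq x0 x1; first by rewrite subnn muln0.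
pose row u := \sum_v ((d u - d v) + (d v - d u)).
have two_rows : #|T| * (d x1 - d x0) <= row x0 + row x1.
  rewrite /row -big_split /= -sum_nat_const; apply: leq_sum => v _.
  by have := range v; lia.
have other_rows : (#|T| - 2) * (d x1 - d x0) <= \sum_(u | (u != x0) && (u != x1)) row u.
  have <- : #|[pred u | (u != x0) && (u != x1)]| = #|T| - 2.
    have /eq_card-> : [pred u | (u != x0) && (u != x1)] =i [predD1 predC1 x1 & x0].
      by move=> u; rewrite !inE andbC.
    have := cardC1 x1; rewrite [#|predC1 x1|](cardD1 x0) !inE x01 add1n.
    by move=> /(congr1 predn) /= ->; rewrite -!subn1 -subnDA.
  rewrite -sum_nat_const; apply: leq_sum => u /andP[u0 u1].
  rewrite /row (bigD1 x0) //= (bigD1 x1) /=; last by rewrite eq_sym.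
  by have := range u; lia.
have n_ge2 : 2 <= #|T| by have := max_card [set x0; x1]; rewrite cards2 x01.
rewrite /spread (bigD1 x0) //= [X in _ + X](bigD1 x1) 1?eq_sym //= addnA.
have -> : 2 * (#|T| - 1) * (d x1 - d x0) = #|T| * (d x1 - d x0) + (#|T| - 2) * (d x1 - d x0).
  by rewrite -mulnDl; congr (_ * _); lia.
by move: two_rows other_rows; rewrite /row; lia.
Qed.

Section TwoValues.
Variable m : nat.
Hypothesis d_two : forall x, d x = m \/ d x = m.+1.

Let lo := #|[set x | d x == m]|.
Let hi := #|[set x | d x == m.+1]|.

Lemma card_two_values : lo + hi = #|T|.
Proof.
rewrite /lo /hi -!sum_indicator -big_split -sum1_card; apply: eq_bigr => x _.
by case: (d_two x) => ->; rewrite eqxx ?(gtn_eqF (ltnSn m)) ?(ltn_eqF (ltnSn m)).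
Qed.

Lemma sum_two_values : \sum_x d x = lo * m + hi * m.+1.
Proof.
rewrite /lo /hi -!sum_indicator !big_distrl -big_split; apply: eq_bigr => x _ /=.
by case: (d_two x) => ->; rewrite eqxx ?(gtn_eqF (ltnSn m)) ?(ltn_eqF (ltnSn m)) /=; lia.
Qed.

Lemma spread_two_values : spread = 2 * (lo * hi).
Proof.
rewrite /spread (eq_bigr (fun u => (d u == m) * \sum_v (d v == m.+1)
                                 + (d u == m.+1) * \sum_v (d v == m))); last first.
  move=> u _; rewrite !big_distrr -big_split; apply: eq_bigr => v _ /=.
  by case: (d_two u) (d_two v) => -> [] ->;
    rewrite ?eqxx ?(gtn_eqF (ltnSn m)) ?(ltn_eqF (ltnSn m)) /=; lia.
by rewrite big_split -!big_distrl /= /lo /hi -!sum_indicator; lia.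
Qed.

End TwoValues.
End Spread.

Section Graph.
Variables (T : finType) (e : rel T).
(* Declared before [e_sym] so that [hf] is the first explicit argument of the
   lemmas using it, which then determines [f]. *)
Variable f : {set T} -> nat.
Hypothesis hf : forall u v : T, u != v ->
  exists ps : seq (seq T), size ps = f [set u; v] /\ disjoint_superpaths e u v ps.
Hypotheses (e_sym : symmetric e) (e_irr : irreflexive e).

Lemma deg_lt_card x : deg e x < #|T|.
Proof.
rewrite /deg -cardsT; apply: proper_card; rewrite properT.
by apply/negP => /eqP full; have := in_setT x; rewrite -full inE e_irr.
Qed.

Lemma deg_gt0 x y : e x y -> 0 < deg e x.
Proof. by move=> exy; apply/card_gt0P; exists y; rewrite inE. Qed.

Lemma deg_gt1 x a b : e x a -> e x b -> a != b -> 1 < deg e x.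
Proof.
move=> exa exb ab; apply: (@leq_trans #|[set a; b]|); first by rewrite cards2 ab.
by apply/subset_leq_card/subsetP => z; rewrite !inE => /orP[]/eqP->.
Qed.

Lemma deg_sum_adj x : deg e x = \sum_y (e x y : nat).
Proof. by rewrite sum_indicator. Qed.

Lemma set2_in_edges u v : ([set u; v] \in edges e) = e u v.
Proof.
rewrite inE; apply/existsP/idP => [[x /existsP[y /andP[exy /eqP uv_xy]]]|euv].
  have : x \in [set u; v] by rewrite uv_xy !inE eqxx.
  have : y \in [set u; v] by rewrite uv_xy !inE eqxx orbT.
  by rewrite !inE => /orP[]/eqP yE /orP[]/eqP xE; subst x y;
    by move: exy; rewrite ?e_irr // e_sym.
by exists u; apply/existsP; exists v; rewrite euv eqxx.
Qed.

Lemma mG_set2 u v : u != v -> mG e [set u; v] = minn (deg e u) (deg e v) - e u v.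
Proof.
move=> uv; rewrite /mG set2_in_edges (bigD1 u) ?inE ?eqxx //=.
rewrite (bigD1 v) ?inE ?eqxx ?orbT 1?eq_sym //=.
rewrite big_pred0; last by move=> x; rewrite !inE; case: (x == u); case: (x == v).
by rewrite (minn_idPl (ltnW (deg_lt_card v))).
Qed.

Lemma handshake : \sum_x deg e x = 2 * nedges e.
Proof.
have -> : nedges e = weight (fun s => (s \in edges e : nat)).
  rewrite /weight -big_mkcondr sum1dep_card /nedges; apply: eq_card => s.
  rewrite [RHS]inE; case s_edge: (s \in edges e); rewrite ?andbF ?andbT //.
  move: s_edge; rewrite inE => /existsP[x /existsP[y /andP[exy /eqP ->]]].
  by rewrite cards2; case: (x =P y) exy => [->|//]; rewrite e_irr.
rewrite -sum_pairs_set2; apply: eq_bigr => u _.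
rewrite deg_sum_adj (bigD1 u) //= e_irr add0n.
by apply: eq_bigr => v _; rewrite set2_in_edges.
Qed.

Lemma mindeg_le x : mindeg e <= deg e x.
Proof. by rewrite /mindeg (bigD1 x) //= geq_minl. Qed.

Lemma maxdeg_ge x : deg e x <= maxdeg e.
Proof. exact: leq_bigmax. Qed.

Lemma mindeg_attained : 0 < #|T| -> exists x, deg e x = mindeg e.
Proof.
move=> /card_gt0P[x0 _]; pose x := [arg min_(y < x0) deg e y].
exists x; apply/eqP; rewrite eqn_leq mindeg_le andbT /mindeg.
apply: (big_ind (leq (deg e x))) => [|a b|y _]; first exact: ltnW (deg_lt_card x).
  by rewrite leq_min => -> ->.
by rewrite /x; case: arg_minnP => // z _; apply.
Qed.

Lemma maxdeg_attained : 0 < #|T| -> exists x, deg e x = maxdeg e.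
Proof. by move=> /(eq_bigmax (deg e))[x]; exists x. Qed.

Lemma weight_mG_spread : 4 * weight (mG e) + spread (deg e) = 4 * (#|T| - 2) * nedges e.
Proof.
have diag_and_pairs :
    \sum_u \sum_v (minn (deg e u) (deg e v) - e u v) = 2 * weight (mG e) + \sum_u deg e u.
  rewrite -sum_pairs_set2 -big_split; apply: eq_bigr => u _ /=.
  rewrite (bigD1 u) //= minnn e_irr subn0 addnC; congr (_ + _).
  by apply: eq_bigr => v vu; rewrite mG_set2 // eq_sym.
have pointwise u v :
    2 * (minn (deg e u) (deg e v) - e u v) + ((deg e u - deg e v) + (deg e v - deg e u))
    + 2 * e u v = deg e u + deg e v.
  have : e u v -> 0 < deg e u /\ 0 < deg e v.
    by move=> euv; rewrite !(deg_gt0 euv) (@deg_gt0 v u) // e_sym.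
  by case: (e u v) => /= [/(_ isT)|_]; lia.
have pairs : 2 * \sum_u \sum_v (minn (deg e u) (deg e v) - e u v) + spread (deg e)
             + 2 * \sum_u deg e u = \sum_u \sum_v (deg e u + deg e v).
  rewrite (eq_bigr _ (fun u _ => deg_sum_adj u)) !big_distrr -!big_split.
  apply: eq_bigr => u _; rewrite !big_distrr -!big_split; apply: eq_bigr => v _.
  exact: pointwise.
have rows : \sum_u \sum_v (deg e u + deg e v) = 2 * (#|T| * \sum_u deg e u).
  rewrite (eq_bigr (fun u => #|T| * deg e u + \sum_v deg e v)) => [|u _].
    by rewrite big_split /= -big_distrr sum_nat_const addnn mul2n.
  by rewrite big_split /= sum_nat_const.
by move: pairs; rewrite rows diag_and_pairs handshake mulnBr mulnBl; lia.
Qed.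

Lemma weight_mG_le_nedges : weight (mG e) <= (#|T| - 2) * nedges e.
Proof. by have := weight_mG_spread; lia. Qed.

Definition superpath_heads u v : {set T} := [set x | e u x && (x != v) && (1 < deg e x)].

Lemma size_disjoint_superpaths u v ps :
  disjoint_superpaths e u v ps -> size ps <= #|superpath_heads u v|.
Proof.
move=> /andP[all_sp disj].
rewrite -(size_map (head u)) cardE; apply: uniq_leq_size.
  elim: ps all_sp disj => [//|p ps IH] /= /andP[sp_p all_sp] /andP[p_disj disj].
  rewrite IH // andbT; apply/mapP => -[q q_ps head_pq].
  move: sp_p => /and3P[]; case: p p_disj head_pq => [//|x p] /= p_disj head_pq _ _ _.
  have := allP p_disj q q_ps; rewrite /= => /andP[+ _].
  case: q q_ps head_pq => [|y q] q_ps /= head_pq; first by move: (allP all_sp _ q_ps).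
  by rewrite head_pq inE eqxx.
move=> x /mapP[p /(allP all_sp) /and3P[]]; case: p => [//|y p] _ /=.
move=> /andP[euy path_yv] /and3P[u_notin y_notin _] ->.
have yv : y != v by apply: contraNneq y_notin => ->; rewrite mem_rcons mem_head.
rewrite mem_enum inE euy yv /=.
case p_v: (rcons p v) u_notin path_yv => [|z s].
  by move: (f_equal size p_v); rewrite size_rcons.
move=> u_notin /= /andP[eyz _]; apply: (@deg_gt1 y u z) => //; first by rewrite e_sym.
by apply: contraNneq u_notin => ->; rewrite !inE eqxx orbT.
Qed.

Lemma card_superpath_heads u v : #|superpath_heads u v| <= deg e u - e u v.
Proof.
rewrite /deg (cardsD1 v [set y | e u y]) inE addKn.
by apply/subset_leq_card/subsetP => z; rewrite !inE => /andP[/andP[-> ->] _].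
Qed.

Lemma f_le_heads u v : u != v -> f [set u; v] <= #|superpath_heads u v|.
Proof. by move=> uv; have [ps [<- /size_disjoint_superpaths]] := hf uv. Qed.

Lemma f_le_mG (s : {set T}) : #|s| == 2 -> f s <= mG e s.
Proof.
move=> /cards2P[a [b [ab ->]]]; rewrite mG_set2 //.
have ba : b != a by rewrite eq_sym.
have fa := leq_trans (f_le_heads ab) (card_superpath_heads a b).
have fb := leq_trans (f_le_heads ba) (card_superpath_heads b a).
rewrite setUC (e_sym b a) in fb.
by case: (e a b) fa fb => /=; lia.
Qed.

Lemma weight_le_mG : weight f <= weight (mG e).
Proof. exact/leq_sum/f_le_mG. Qed.

Lemma weight_eq0_of_deg_le1 : (forall x, deg e x <= 1) -> weight f = 0.
Proof.
move=> deg_le1; apply: big1 => s /cards2P[a [b [ab ->]]].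
apply/eqP; rewrite -leqn0 (leq_trans (f_le_heads ab)) // leqn0 cards_eq0.
by apply/eqP/setP => x; rewrite !inE ltnNge deg_le1 andbF.
Qed.

Lemma weight_le1_of_single_branch c :
  (forall x, 1 < deg e x -> x = c) -> deg e c = 2 -> weight f <= 1.
Proof.
move=> only_c deg_c.
have heads_le1 u v : #|superpath_heads u v| <= 1.
  rewrite -(cards1 c); apply/subset_leq_card/subsetP => x.
  by rewrite !inE => /andP[_ /only_c ->].
have heads_adj u v : 0 < #|superpath_heads u v| -> e u c.
  by move=> /card_gt0P[x]; rewrite !inE => /andP[/andP[eux _] /only_c <-].
have f_le_nbhd (s : {set T}) : #|s| == 2 -> f s <= (s == [set y | e c y]).
  move=> /cards2P[a [b [ab ->]]].
  have ba : b != a by rewrite eq_sym.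
  have [->|f_pos] := posnP (f [set a; b]); first by [].
  have eac := heads_adj _ _ (leq_trans f_pos (f_le_heads ab)).
  have ebc : e b c by apply: (heads_adj _ a); rewrite (leq_trans f_pos) // setUC f_le_heads.
  have -> : [set a; b] == [set y | e c y].
    rewrite eqEcard -/(deg e c) deg_c cards2 ab andbT.
    by apply/subsetP => x; rewrite !inE => /orP[]/eqP->; rewrite e_sym.
  exact: leq_trans (f_le_heads ab) (heads_le1 a b).
apply: (@leq_trans (\sum_(s : {set T} | #|s| == 2) (s == [set y | e c y] : nat))).
  exact: leq_sum.
apply: (@leq_trans (\sum_(s : {set T}) (s == [set y | e c y] : nat))).
  by rewrite [X in _ <= X](bigID (fun s : {set T} => #|s| == 2)) leq_addr.
rewrite sum_indicator (_ : [set s | s == _] = [set [set y | e c y]]) ?cards1 //.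
by apply/setP => s; rewrite !inE.
Qed.

Section Tight.
Hypotheses (n_ge3 : 3 <= #|T|) (E_gt0 : 0 < nedges e)
           (E_tight : nedges e = ceil_div (weight f) (#|T| - 2)).

Let n2_gt0 : 0 < #|T| - 2. Proof. by rewrite subn_gt0. Qed.
Let n_gt0 : 0 < #|T|. Proof. exact: leq_trans n_ge3. Qed.

Lemma tight_ceil_mG : nedges e = ceil_div (weight (mG e)) (#|T| - 2).
Proof.
apply/eqP; rewrite eqn_leq {1}E_tight leq_ceil_div2r ?weight_le_mG //.
by rewrite leq_ceil_div // mulnC weight_mG_le_nedges.
Qed.

Lemma tight_spread : spread (deg e) <= 4 * (#|T| - 3).
Proof.
have := ceil_divM_le (weight f) (#|T| - 2); rewrite -E_tight.
by have := weight_mG_spread; have := weight_le_mG; lia.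
Qed.

Lemma tight_maxdeg_ge2 : 2 <= maxdeg e.
Proof.
rewrite ltnNge; apply/negP => maxdeg_le1.
have := weight_eq0_of_deg_le1 (fun x => leq_trans (maxdeg_ge x) maxdeg_le1).
by move: E_gt0; rewrite E_tight => + f0; rewrite f0 ltnNge leq_ceil_div.
Qed.

Lemma tight_deg_gap : maxdeg e <= (mindeg e).+1.
Proof.
have [x0 dx0] := mindeg_attained n_gt0; have [x1 dx1] := maxdeg_attained n_gt0.
have range x : deg e x0 <= deg e x <= deg e x1 by rewrite dx0 dx1 mindeg_le maxdeg_ge.
have := spread_ge_range range; rewrite dx0 dx1.
by have := tight_spread; nia.
Qed.

Lemma tight_regular : regular e -> 2 <= mindeg e.
Proof. by move=> /eqP <-; apply: tight_maxdeg_ge2. Qed.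

Section Irregular.
Hypothesis irregular : ~~ regular e.

Lemma tight_irregular_maxdeg : maxdeg e = (mindeg e).+1.
Proof.
have [x _] := maxdeg_attained n_gt0.
have := leq_trans (mindeg_le x) (maxdeg_ge x); have := tight_deg_gap.
by move: irregular; rewrite /regular; lia.
Qed.

Let deg_two_values x : deg e x = mindeg e \/ deg e x = (mindeg e).+1.
Proof. by have := mindeg_le x; have := maxdeg_ge x; rewrite tight_irregular_maxdeg; lia. Qed.

Let card_mindeg := #|[set x | deg e x == mindeg e]|.
Let card_maxdeg := #|[set x | deg e x == maxdeg e]|.

Lemma tight_irregular_counts : card_mindeg = 1 \/ card_maxdeg = 1.
Proof.
have [x0 dx0] := mindeg_attained n_gt0; have [x1 dx1] := maxdeg_attained n_gt0.
have min_gt0 : 0 < card_mindeg by apply/card_gt0P; exists x0; rewrite inE dx0.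
have max_gt0 : 0 < card_maxdeg by apply/card_gt0P; exists x1; rewrite inE dx1.
have := card_two_values deg_two_values; have := spread_two_values deg_two_values.
rewrite -tight_irregular_maxdeg -/card_mindeg -/card_maxdeg.
by have := tight_spread; nia.
Qed.

Lemma tight_irregular_spread : spread (deg e) = 2 * (#|T| - 1).
Proof.
have := card_two_values deg_two_values; rewrite (spread_two_values deg_two_values).
by rewrite -tight_irregular_maxdeg -/card_mindeg -/card_maxdeg; case: tight_irregular_counts; nia.
Qed.

Let tight_mindeg_ge1 : 1 <= mindeg e.
Proof. by have := tight_maxdeg_ge2; rewrite tight_irregular_maxdeg. Qed.

Let degree_sum : 2 * nedges e = card_mindeg * mindeg e + card_maxdeg * (mindeg e).+1.
Proof. by rewrite -handshake (sum_two_values deg_two_values) -tight_irregular_maxdeg. Qed.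

Let card_sum : card_mindeg + card_maxdeg = #|T|.
Proof. by rewrite -(card_two_values deg_two_values) /card_maxdeg tight_irregular_maxdeg. Qed.

Lemma tight_unique_mindeg : card_mindeg = 1 -> 2 <= mindeg e.
Proof.
move=> min1; rewrite ltnNge; apply/negP => mindeg_le1.
have mindeg1 : mindeg e = 1 by have := tight_mindeg_ge1; lia.
by move: degree_sum card_sum; rewrite min1 mindeg1; lia.
Qed.

Lemma tight_unique_maxdeg : card_maxdeg = 1 -> 3 <= mindeg e.
Proof.
move=> max1; rewrite ltnNge; apply/negP => mindeg_le2.
have [c dc] := maxdeg_attained n_gt0.
have [mindeg1|mindeg2] : mindeg e = 1 \/ mindeg e = 2 by have := tight_mindeg_ge1; lia.
  have only_c x : 1 < deg e x -> x = c.
    move=> deg_gt1; have /cards1P[y max_y] : card_maxdeg == 1 by rewrite max1.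
    have : x \in [set x | deg e x == maxdeg e].
      rewrite inE tight_irregular_maxdeg.
      by case: (deg_two_values x) deg_gt1 => ->; rewrite mindeg1.
    have : c \in [set x | deg e x == maxdeg e] by rewrite inE dc.
    by rewrite max_y !inE => /eqP-> /eqP->.
  have := weight_le1_of_single_branch only_c; rewrite dc tight_irregular_maxdeg mindeg1.
  move=> /(_ erefl) /(leq_ceil_div2r (#|T| - 2)); rewrite -E_tight => E_le.
  have : nedges e <= 1 by apply: leq_trans E_le _; rewrite leq_ceil_div // mul1n.
  by move: degree_sum card_sum; rewrite max1 mindeg1; lia.
by move: degree_sum card_sum; rewrite max1 mindeg2; lia.
Qed.

End Irregular.

Lemma tight_weight_mG :
  2 * (#|T| - 2) * nedges e = 2 * weight (mG e) + (if regular e then 0 else #|T| - 1).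
Proof.
have := weight_mG_spread; case: ifP => [/eqP regular_e | /negbT irregular].
  rewrite spread_eq0; first lia.
  move=> u v; have := mindeg_le u; have := maxdeg_ge u.
  by have := mindeg_le v; have := maxdeg_ge v; lia.
by rewrite tight_irregular_spread //; lia.
Qed.
End Tight.

End Graph.

Theorem lemma2p11 (T : finType) (e : rel T)
  (e_sym : symmetric e) (e_irr : irreflexive e)
  (n_ge3 : 3 <= #|T|) (f : {set T} -> nat)
  (hf : forall u v : T, u != v ->
      exists ps : seq (seq T),
        size ps = f [set u; v] /\ disjoint_superpaths e u v ps) :
  (* (a) *)
  ceil_div (weight f) (#|T| - 2) <= nedges e /\
  (* (b) *)
  (1 <= nedges e -> nedges e = ceil_div (weight f) (#|T| - 2) ->
     [/\ maxdeg e - mindeg e <= 1,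
         [\/ regular e /\ 2 <= mindeg e,
             [/\ #|[set x | deg e x == mindeg e]| = 1, 3 <= maxdeg e & 2 <= mindeg e]
           | [/\ #|[set x | deg e x == maxdeg e]| = 1, 4 <= maxdeg e & 3 <= mindeg e]],
         nedges e = ceil_div (weight (mG e)) (#|T| - 2) &
         (* e(G) = (w(m_G) + s)/(n-2), s = 0 if regular, (n-1)/2 otherwise;
            stated with denominators cleared *)
         2 * (#|T| - 2) * nedges e =
           2 * weight (mG e) + (if regular e then 0 else #|T| - 1)]).
Proof.
have n2_gt0 : 0 < #|T| - 2 by rewrite subn_gt0.
split.
  rewrite leq_ceil_div // mulnC.
  exact: leq_trans (weight_le_mG hf e_sym e_irr) (weight_mG_le_nedges e_sym e_irr).
move=> E_gt0 E_tight.
have gap : maxdeg e <= (mindeg e).+1 by apply: (tight_deg_gap hf).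
split; [lia | | by apply: (tight_ceil_mG hf) | by apply: (tight_weight_mG hf)].
have [regular_e | irregular] := boolP (regular e).
  by apply: Or31; split => //; apply: (tight_regular hf).
have maxdeg_eq : maxdeg e = (mindeg e).+1 by apply: (tight_irregular_maxdeg hf).
have [min1 | max1] := tight_irregular_counts hf e_sym e_irr n_ge3 E_gt0 E_tight irregular.
  have mindeg_ge2 : 2 <= mindeg e by apply: (tight_unique_mindeg hf).
  by apply: Or32; split => //; lia.
have mindeg_ge3 : 3 <= mindeg e by apply: (tight_unique_maxdeg hf).
by apply: Or33; split => //; lia.
Qed.
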